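(* For every integer $n\ge0$, as polynomials in $z$, $$\sum_{k=0}^n\binom nk^2\binom{-\imath z-\tfrac12+k}{n}=(-1)^n\,{}_3F_2\!\left(\begin{matrix}-n,\ n+1,\ \tfrac12-\imath z\\ 1,\ 1\end{matrix}\,\Big|\,1\right).$$ Equivalently, the polynomial $P_n(z)=\frac{\imath^n(n!)^3}{(2n)!}\sum_{k=0}^n\binom nk^2\binom{-\imath z-\frac12+k}{n}$ associated to $a_{n,k}=\binom{2n}{n}^{-1}\binom nk^2$ equals $\frac{(-\imath)^n(n!)^3}{(2n)!}\,{}_3F_2\!\left(\begin{smallmatrix}-n,\ n+1,\ \frac12-\imath z\\ 1,\ 1\end{smallmatrix}\big|1\right)$.
   Context: $\imath=\sqrt{-1}$. For complex $x$, $\binom{x}{n}=\frac{1}{n!}\prod_{\ell=0}^{n-1}(x-\ell)$; $(x)_k=x(x+1)\cdots(x+k-1)$. ${}_3F_2\!\left(\begin{smallmatrix}a_1,a_2,a_3\\ b_1,b_2\end{smallmatrix}\big|x\right)=\sum_{k\ge0}\frac{(a_1)_k(a_2)_k(a_3)_k}{(b_1)_k(b_2)_k}\frac{x^k}{k!}$ (terminating here since $a_1=-n$). *)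

From HB Require Import structures.
From mathcomp Require Import all_boot all_order all_algebra all_field.
Set Implicit Arguments. Unset Strict Implicit. Unset Printing Implicit Defensive.
Import Order.TTheory GRing.Theory Num.Theory.
Local Open Scope ring_scope.

Definition gbinom (R : fieldType) (x : R) (n : nat) : R :=
  (\prod_(l < n) (x - l%:R)) / (n`!)%:R.

Definition poch (R : pzRingType) (x : R) (k : nat) : R :=
  \prod_(i < k) (x + i%:R).

(* Terminating 3F2: sum of the hypergeometric series for k = 0..N.
   When a1 = -n (n a natural number) all terms with k > n vanish, so
   taking N = n gives the full (terminating) series. *)
Definition hyp3F2 (R : fieldType) (a1 a2 a3 b1 b2 x : R) (N : nat) : R :=
  \sum_(k < N.+1)
    (poch a1 k * poch a2 k * poch a3 k) / (poch b1 k * poch b2 k)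
    * x ^+ k / (k`!)%:R.

From HB Require Import structures.
From mathcomp Require Import all_boot all_order all_algebra all_field.
From mathcomp Require Import ring zify.
Import Order.TTheory GRing.Theory Num.Theory.
Local Open Scope ring_scope.

(* Put w = -iz - 1/2.  Both sides are polynomials in w, and we expand each
   of them in the basis (binom w j)_{j <= n}:
   - on the left, Chu-Vandermonde gives binom(w+k, n) =
     sum_j binom(w, j) C(k, n-j), and the resulting coefficient
     sum_k C(n,k)^2 C(k,n-j) equals C(n,j) C(n+j,n) (Vandermonde again);
   - on the right, the k-th 3F2 term is (-1)^k C(n,k) C(n+k,k) binom(w+k,k)
     (Pochhammer bookkeeping), binom(w+k,k) = sum_j binom(w,j) C(k,j), and
     the coefficient sum_k (-1)^k C(n,k) C(n+k,k) C(k,j) equals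
     (-1)^n C(n,j) C(n+j,n) by an n-j fold finite-difference identity. *)

Lemma big_drop_neutral_prefix (T : Type) (idx : T) (op : Monoid.law idx)
    (F : nat -> T) N i :
  (i <= N)%N -> (forall k, (k < i)%N -> F k = idx) ->
  \big[op/idx]_(k < N.+1) F k = \big[op/idx]_(t < (N - i).+1) F (t + i)%N.
Proof.
move=> le_iN F0.
rewrite -!(big_mkord xpredT) (big_cat_nat (n := i)) ?(leq_trans le_iN) //=.
rewrite big_nat_cond big1 ?Monoid.mul1m; last first.
  by move=> k /andP[/andP[_ lt_ki] _]; apply: F0.
by rewrite -{1}(add0n i) big_addn subSn // big_mkord.
Qed.

Lemma bin_mul_shift n i t :
  ('C(n, t + i) * 'C(t + i, i) = 'C(n, i) * 'C(n - i, t))%N.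
Proof.
have [le_tin | lt_ntin] := leqP (t + i) n; last first.
  rewrite bin_small // mul0n.
  have [le_in | lt_ni] := leqP i n; last by rewrite bin_small.
  by rewrite (bin_small (n := n - i)) ?muln0 // ltn_subLR // addnC.
have le_in : (i <= n)%N by apply: leq_trans le_tin; apply: leq_addl.
have le_t_ni : (t <= n - i)%N by rewrite leq_subRL // addnC.
have fact_ti := bin_fact (leq_addl t i); rewrite addnK in fact_ti.
have fact_n : ('C(n, t + i) * ((t + i)`! * (n - i - t)`!))%N = n`!.
  by rewrite -subnDA [(i + t)%N]addnC bin_fact.
apply/eqP; rewrite -(eqn_pmul2r (_ : 0 < i`! * t`! * (n - i - t)`!)%N);
  last by rewrite !muln_gt0 !fact_gt0.
apply/eqP; transitivity ('C(n, t + i) * (('C(t + i, i) * (i`! * t`!))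
                                         * (n - i - t)`!))%N.
  by rewrite !mulnA.
rewrite fact_ti fact_n -(bin_fact le_in) -(bin_fact le_t_ni).
by rewrite !mulnA [('C(n, i) * 'C(n - i, t) * i`!)%N]mulnAC.
Qed.

Lemma sum_sqr_bin_bin n j : (j <= n)%N ->
  (\sum_(k < n.+1) 'C(n, k) ^ 2 * 'C(k, n - j) = 'C(n, j) * 'C(n + j, n))%N.
Proof.
move=> le_jn.
rewrite (@big_drop_neutral_prefix _ _ _ (fun k => 'C(n, k) ^ 2 * 'C(k, n - j))%N
  n (n - j)) ?leq_subr //; last first.
  by move=> k lt_k; rewrite (bin_small lt_k) muln0.
rewrite subKn //.
transitivity (\sum_(t < j.+1) 'C(n, j) * ('C(j, t) * 'C(n, j - t)))%N.
  apply: eq_bigr => t _; have lt_tj := ltn_ord t.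
  rewrite expnS expn1 -mulnA bin_mul_shift subKn // bin_sub //.
  have -> : (t + (n - j) = n - (j - t))%N by lia.
  by rewrite bin_sub; [rewrite mulnC -mulnA | lia].
rewrite -big_distrr /= binomial.Vandermonde addnC; congr (_ * _)%N.
by rewrite -[RHS]bin_sub ?leq_addr // addKn.
Qed.

Section SignedBinomialSums.
Variable R : comNzRingType.

Lemma alternating_sum_diff (f : nat -> R) m :
  \sum_(t < m.+2) (-1) ^+ t * 'C(m.+1, t)%:R * f t
  = \sum_(t < m.+1) (-1) ^+ t * 'C(m, t)%:R * (f t - f t.+1).
Proof.
have split_head : \sum_(t < m.+1) (-1) ^+ t * 'C(m, t)%:R * f t
   = f 0%N + \sum_(i < m.+1) (-1) ^+ i.+1 * 'C(m, i.+1)%:R * f i.+1.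
  transitivity (\sum_(t < m.+2) (-1) ^+ t * 'C(m, t)%:R * f t).
    by rewrite [RHS]big_ord_recr /= bin_small // mulr0 mul0r addr0.
  by rewrite big_ord_recl /= expr0 bin0 !mul1r.
under [RHS]eq_bigr => t _ do rewrite mulrBr.
rewrite sumrB split_head big_ord_recl /= expr0 bin0 !mul1r -addrA.
congr (_ + _); rewrite -sumrB; apply: eq_bigr => i _.
by rewrite binS natrD exprS; ring.
Qed.

Lemma alternating_sum_bin m p N : (m <= p)%N ->
  \sum_(t < m.+1) (-1) ^+ t * 'C(m, t)%:R * 'C(N + t, p)%:R
  = (-1) ^+ m * 'C(N, p - m)%:R :> R.
Proof.
elim: m p => [|m IH] p le_mp.
  by rewrite big_ord_recl big_ord0 /= addr0 addn0 subn0 expr0 bin0 !mul1r.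
case: p le_mp => [//|p] le_mp.
rewrite (alternating_sum_diff (fun t => 'C(N + t, p.+1)%:R : R)).
transitivity (- \sum_(t < m.+1) (-1) ^+ t * 'C(m, t)%:R * 'C(N + t, p)%:R : R).
  rewrite -sumrN; apply: eq_bigr => t _.
  by rewrite addnS binS natrD; ring.
by rewrite IH // subSS exprS; ring.
Qed.

Lemma alternating_sum_bin_bin n j : (j <= n)%N ->
  \sum_(k < n.+1) (-1) ^+ k * 'C(n, k)%:R * 'C(n + k, k)%:R * 'C(k, j)%:R
  = (-1) ^+ n * ('C(n, j) * 'C(n + j, n))%:R :> R.
Proof.
move=> le_jn.
rewrite (@big_drop_neutral_prefix _ _ _
  (fun k => (-1) ^+ k * 'C(n, k)%:R * 'C(n + k, k)%:R * 'C(k, j)%:R : R) n j) //;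
  last first.
  by move=> k lt_kj; rewrite (bin_small lt_kj) mulr0.
transitivity ((-1) ^+ j * 'C(n, j)%:R *
  \sum_(t < (n - j).+1) (-1) ^+ t * 'C(n - j, t)%:R * 'C(n + j + t, n)%:R : R).
  rewrite big_distrr /=; apply: eq_bigr => t _.
  have -> : 'C(n + (t + j), t + j) = 'C(n + j + t, n).
    by rewrite -[RHS]bin_sub; [congr 'C(_, _) | ]; lia.
  have shift : 'C(n, t + j)%:R * 'C(t + j, j)%:R
               = 'C(n, j)%:R * 'C(n - j, t)%:R :> R.
    by rewrite -!natrM bin_mul_shift.
  transitivity ((-1) ^+ t * (-1) ^+ j * ('C(n, t + j)%:R * 'C(t + j, j)%:R)
                * 'C(n + j + t, n)%:R : R); first by rewrite exprD; ring.
  by rewrite shift; ring.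
rewrite alternating_sum_bin ?leq_subr // subKn //.
have sign : (-1) ^+ n = (-1) ^+ j * (-1) ^+ (n - j) :> R.
  by rewrite -exprD subnKC.
have sym : 'C(n + j, j) = 'C(n + j, n).
  by rewrite -[RHS]bin_sub ?leq_addr // addKn.
by rewrite sign sym natrM; ring.
Qed.

End SignedBinomialSums.

Section Pochhammer.
Variable R : comNzRingType.

Lemma poch0 (x : R) : poch x 0 = 1.
Proof. by rewrite /poch big_ord0. Qed.

Lemma pochS (x : R) k : poch x k.+1 = poch x k * (x + k%:R).
Proof. by rewrite /poch big_ord_recr. Qed.

Lemma poch1 k : poch (1 : R) k = k`!%:R.
Proof.
elim: k => [|k IH]; first by rewrite poch0.
by rewrite pochS IH factS natrM -addn1 natrD; ring.
Qed.

Lemma poch_oppn n k : (k <= n)%N ->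
  poch (- n%:R : R) k = (-1) ^+ k * ('C(n, k) * k`!)%:R.
Proof.
elim: k => [|k IH] le_kn; first by rewrite poch0 bin0 expr0 mul1r mul1n.
rewrite pochS IH ?(ltnW le_kn) // !bin_ffact ffactnSr natrM natrB ?(ltnW le_kn) //.
by rewrite exprS; ring.
Qed.

Lemma poch_natS n k : poch ((n.+1)%:R : R) k * n`!%:R = (n + k)`!%:R.
Proof.
elim: k => [|k IH]; first by rewrite poch0 mul1r addn0.
rewrite pochS mulrAC IH addnS factS natrM -addn1 natrD -addnS natrD.
by ring.
Qed.

End Pochhammer.

Section GeneralizedBinomial.
Variable R : numFieldType.
Implicit Types (x w : R) (n k j N : nat).

Lemma fact_neq0 k : (k`!)%:R != 0 :> R.
Proof. by rewrite pnatr_eq0 -lt0n fact_gt0. Qed.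

Lemma gbinomE x n : gbinom x n * (n`!)%:R = \prod_(l < n) (x - l%:R).
Proof. by rewrite /gbinom mulfVK ?fact_neq0. Qed.

Lemma gbinom0 x : gbinom x 0 = 1.
Proof. by rewrite /gbinom big_ord0 fact0 divr1. Qed.

Lemma gbinomS x n : gbinom (x + 1) n.+1 = gbinom x n.+1 + gbinom x n.
Proof.
apply: (mulIf (fact_neq0 n.+1)).
rewrite mulrDl gbinomE gbinomE big_ord_recl big_ord_recr /= factS natrM mulrCA gbinomE.
rewrite (eq_bigr (fun i : 'I_n => x - i%:R)) => [|i _]; last first.
  by rewrite /bump /= add1n mulrS; ring.
by rewrite subr0; ring.
Qed.

Lemma gbinom_addn x k n :
  gbinom (x + k%:R) n = \sum_(j < n.+1) gbinom x j * 'C(k, n - j)%:R.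
Proof.
elim: k n => [|k IH] n.
  rewrite addr0 big_ord_recr /= subnn bin0 mulr1 big1 ?add0r // => j _.
  by rewrite bin0n subn_eq0 leqNgt ltn_ord mulr0.
case: n => [|n].
  by rewrite gbinom0 big_ord_recr big_ord0 /= gbinom0 bin0 mulr1 add0r.
rewrite -addn1 natrD addrA gbinomS !IH.
rewrite [in RHS]big_ord_recr /= subnn bin0 [in LHS]big_ord_recr /= subnn bin0.
rewrite addrAC; congr (_ + _).
rewrite -big_split /=; apply: eq_bigr => j _.
have le_jn : (j <= n)%N by rewrite -ltnS.
by rewrite subSn // addn1 binS natrD mulrDr.
Qed.

Lemma gbinom_addn_diag x k N : (k <= N)%N ->
  gbinom (x + k%:R) k = \sum_(j < N.+1) gbinom x j * 'C(k, j)%:R.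
Proof.
move=> le_kN.
rewrite gbinom_addn (big_ord_widen N.+1 (fun j => gbinom x j * 'C(k, k - j)%:R)) //.
rewrite big_mkcond; apply: eq_bigr => j _; case: ifP => lt_jk.
  by rewrite bin_sub // -ltnS.
by rewrite bin_small ?mulr0 // ltnNge -ltnS lt_jk.
Qed.

Lemma poch_gbinom x k : poch (x + 1) k = gbinom (x + k%:R) k * k`!%:R.
Proof.
elim: k => [|k IH]; first by rewrite poch0 gbinom0 mul1r.
rewrite pochS IH !gbinomE big_ord_recl /= subr0.
rewrite [X in _ = _ * X](eq_bigr (fun i : 'I_k => x + k%:R - i%:R)) => [|i _].
  by rewrite mulrS; ring.
by rewrite /bump /= add1n !mulrS; ring.
Qed.

Lemma hyp3F2_term w n k : (k <= n)%N ->
  poch (- n%:R) k * poch (n.+1)%:R k * poch (w + 1) k / (poch 1 k * poch 1 k)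
    * 1 ^+ k / (k`!)%:R
  = (-1) ^+ k * 'C(n, k)%:R * 'C(n + k, k)%:R * gbinom (w + k%:R) k.
Proof.
move=> le_kn.
have poch_n : poch ((n.+1)%:R : R) k = (n + k)`!%:R / n`!%:R.
  by rewrite -poch_natS mulfK ?fact_neq0.
have bin_nk : 'C(n + k, k)%:R = (n + k)`!%:R / (k`!%:R * n`!%:R) :> R.
  have := bin_fact (leq_addl n k); rewrite addnK => <-.
  by rewrite !natrM mulfK // mulf_neq0 ?fact_neq0.
rewrite poch_oppn // !poch1 poch_gbinom expr1n mulr1 natrM poch_n bin_nk.
by field; rewrite !fact_neq0.
Qed.

Lemma sum_sqr_bin_gbinom w n :
  \sum_(k < n.+1) 'C(n, k)%:R ^+ 2 * gbinom (w + k%:R) n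
  = \sum_(j < n.+1) gbinom w j * ('C(n, j) * 'C(n + j, n))%:R.
Proof.
under eq_bigr => k _ do rewrite gbinom_addn big_distrr.
rewrite exchange_big /=; apply: eq_bigr => j _.
rewrite -(@sum_sqr_bin_bin n j (ltnSE (ltn_ord j))) natr_sum big_distrr /=.
by apply: eq_bigr => k _; rewrite natrM natrX; ring.
Qed.

Lemma hyp3F2_gbinom w n :
  hyp3F2 (- n%:R) (n.+1)%:R (w + 1) 1 1 1 n
  = (-1) ^+ n * \sum_(j < n.+1) gbinom w j * ('C(n, j) * 'C(n + j, n))%:R.
Proof.
rewrite /hyp3F2.
under eq_bigr => k _.
  have le_kn := ltnSE (ltn_ord k).
  rewrite hyp3F2_term // (@gbinom_addn_diag w k n le_kn) big_distrr /=.
  over.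
rewrite exchange_big big_distrr /=; apply: eq_bigr => j _.
rewrite mulrCA -(@alternating_sum_bin_bin R n j (ltnSE (ltn_ord j))).
rewrite big_distrr /=.
by apply: eq_bigr => k _; ring.
Qed.

End GeneralizedBinomial.

Theorem lemma5p9 (n : nat) (z : algC) :
  \sum_(k < n.+1) ('C(n, k)%:R) ^+ 2 * gbinom (- 'i * z - 2^-1 + k%:R) n
  = (-1) ^+ n * hyp3F2 (- n%:R) (n.+1)%:R (2^-1 - 'i * z) 1 1 1 n.
Proof.
set w := - 'i * z - 2^-1.
have -> : 2^-1 - 'i * z = w + 1 by rewrite /w; field.
by rewrite sum_sqr_bin_gbinom hyp3F2_gbinom mulrA -expr2 sqrr_sign mul1r.
Qed.
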